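(* Let $E$ be a finite set, $\omega:2^E\to[0,\infty)$, and suppose $Z=Z(\omega;\mathbf{y})$ is Rayleigh. Let $e,f,g\in E$ be distinct. Then for all $\mathbf{y}$ with all $y_c>0$, $$\Theta Z\{e,f|g\}\ge -2\sqrt{\Delta Z^g\{e,f\}\,\Delta Z_g\{e,f\}},$$ where $\Theta Z\{e,f|g\}=Z_e^{fg}Z_{fg}^e+Z_f^{eg}Z_{eg}^f-Z_g^{ef}Z_{ef}^g-Z_{efg}Z^{efg}$.
   Context: $Z(\omega;\mathbf{y})=\sum_{S\subseteq E}\omega(S)\prod_{e\in S}y_e$ with $\omega$ not identically zero. For a multiaffine polynomial $Z$, superscripts denote setting the indicated variables to $0$ and subscripts denote partial differentiation in the indicated variables, e.g. $Z_e^{fg}=(\partial Z/\partial y_e)|_{y_f=y_g=0}$. $\Delta Z\{e,f\}=Z_eZ_f-Z_{ef}Z$; $\Delta Z^g\{e,f\}$ and $\Delta Z_g\{e,f\}$ denote this quantity computed for the polynomials $Z^g$ and $Z_g$ respectively. $Z$ is Rayleigh if $\Delta Z\{e,f\}(\mathbf{y})\ge0$ for all distinct $e,f$ and all $\mathbf{y}>0$ coordinatewise. *)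

From mathcomp Require Import all_boot all_order all_algebra.
Set Implicit Arguments. Unset Strict Implicit. Unset Printing Implicit Defensive.
Import Order.TTheory GRing.Theory Num.Theory.
Local Open Scope ring_scope.

(* A multiaffine polynomial over ground set E (a finType) with coefficients
   in R is represented by its coefficient function  w : {set E} -> R,
   i.e. by  Z(w; y) = \sum_S w(S) \prod_{e in S} y_e . *)
Section Multiaffine.
Variables (R : rcfType) (E : finType).

Definition Zeval (w : {set E} -> R) (y : E -> R) : R :=
  \sum_(S : {set E}) w S * \prod_(i in S) y i.

(* coefficients of  dZ/dy_e  (exact formula for a multiaffine polynomial):
   the coefficient of the monomial y^S (e notin S) is w(S + e). *)
Definition mderiv (e : E) (w : {set E} -> R) : {set E} -> R :=
  fun S => if e \in S then 0 else w (e |: S).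

(* coefficients of  Z|_{y_e = 0} : drop monomials containing y_e. *)
Definition msetz (e : E) (w : {set E} -> R) : {set E} -> R :=
  fun S => if e \in S then 0 else w S.

Definition DeltaZ (w : {set E} -> R) (e f : E) (y : E -> R) : R :=
  Zeval (mderiv e w) y * Zeval (mderiv f w) y
  - Zeval (mderiv e (mderiv f w)) y * Zeval w y.

Definition Rayleigh (w : {set E} -> R) : Prop :=
  forall (e f : E) (y : E -> R), e != f -> (forall c, 0 < y c) ->
    0 <= DeltaZ w e f y.

Definition ThetaZ (w : {set E} -> R) (e f g : E) (y : E -> R) : R :=
    Zeval (mderiv e (msetz f (msetz g w))) y
      * Zeval (mderiv f (mderiv g (msetz e w))) y
  + Zeval (mderiv f (msetz e (msetz g w))) y
      * Zeval (mderiv e (mderiv g (msetz f w))) y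
  - Zeval (mderiv g (msetz e (msetz f w))) y
      * Zeval (mderiv e (mderiv f (msetz g w))) y
  - Zeval (mderiv e (mderiv f (mderiv g w))) y
      * Zeval (msetz e (msetz f (msetz g w))) y.

End Multiaffine.

(* Freeze every variable except y_g and put y_g = t.  Expanding all the
   polynomials involved in y_e, y_f and y_g shows that Delta Z{e,f} becomes
   the quadratic  Delta Z^g{e,f} + t Theta Z{e,f|g} + t^2 Delta Z_g{e,f}  in t,
   which the Rayleigh property keeps nonnegative for every t > 0.  A real
   quadratic that is nonnegative on (0, oo) has linear coefficient at least
   -2 sqrt of the product of the other two. *)

From mathcomp Require Import all_boot all_order all_algebra.
From mathcomp Require Import ring lra.
Set Implicit Arguments. Unset Strict Implicit.
Import Order.TTheory GRing.Theory Num.Theory.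
Local Open Scope ring_scope.

Section Multiaffine.
Variables (R : rcfType) (E : finType).
Implicit Types (v : {set E} -> R) (y : E -> R).

Lemma eq_Zeval v1 v2 y : v1 =1 v2 -> Zeval v1 y = Zeval v2 y.
Proof. by move=> eq_v; apply: eq_bigr => S _; rewrite eq_v. Qed.

Lemma Zeval_eq0 v y : v =1 (fun=> 0) -> Zeval v y = 0.
Proof. by move=> v0; rewrite /Zeval big1 // => S _; rewrite v0 mul0r. Qed.

Lemma Zeval_split v y c :
  Zeval v y = Zeval (msetz c v) y + y c * Zeval (mderiv c v) y.
Proof.
pose P (S : {set E}) := c \in S.
rewrite /Zeval (bigID P) [in RHS](bigID P) [X in _ + _ * X](bigID P) {}/P /=.
rewrite [in RHS]big1 => [|S c_S]; last by rewrite /msetz c_S mul0r.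
rewrite [X in _ * (X + _)]big1 => [|S c_S]; last by rewrite /mderiv c_S mul0r.
rewrite !add0r addrC; congr (_ + _).
  by apply: eq_bigr => S /negbTE c_S; rewrite /msetz c_S.
pose toggle (S : {set E}) := if c \in S then S :\ c else c |: S.
have toggleK : involutive toggle.
  move=> S; rewrite /toggle; have [c_S | c_nS] := boolP (c \in S).
    by rewrite setD11 setD1K.
  by rewrite setU11 setU1K.
rewrite mulr_sumr (reindex_inj (inv_inj toggleK)) /=.
apply: eq_big => S; first by rewrite /toggle; case: ifP; rewrite ?setD11 ?setU11.
rewrite /toggle; case: ifP => [_|/negbT c_S _]; first by rewrite setD11.
by rewrite /mderiv (negbTE c_S) big_setU1 //= mulrCA.
Qed.

Section Slices.
Variables (e f g : E).
Hypotheses (hef : e != f) (heg : e != g) (hfg : f != g).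

Definition tset (a b c : bool) : {set E} :=
  [set x | [|| (x == e) && a, (x == f) && b | (x == g) && c]].

(* Z(mslice a b c v) is the coefficient of y_e^a y_f^b y_g^c when Z(v) is
   expanded in y_e, y_f, y_g; it does not involve these three variables. *)
Definition mslice (a b c : bool) v : {set E} -> R :=
  fun S => if [&& e \notin S, f \notin S & g \notin S]
           then v (tset a b c :|: S) else 0.

Definition Zslice (a b c : bool) v y : R := Zeval (mslice a b c v) y.

Let neq_efg := (negbTE hef, negbTE heg, negbTE hfg,
                etrans (eq_sym f e) (negbTE hef),
                etrans (eq_sym g e) (negbTE heg),
                etrans (eq_sym g f) (negbTE hfg)).

Ltac slice_pointwise :=
  let S := fresh "S" in let x := fresh "x" in
  move=> S; rewrite /mslice /mderiv /msetz /tset ?inE ?eqxx ?neq_efg /=;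
  case: (e \in S); case: (f \in S); case: (g \in S);
  rewrite /= ?inE ?eqxx ?neq_efg //=;
  try (f_equal; apply/setP => x; rewrite !inE;
       by case: (x == e); case: (x == f); case: (x == g); case: (x \in S)).

Ltac slice_rule :=
  rewrite /Zslice; first [apply: Zeval_eq0 | apply: eq_Zeval]; slice_pointwise.

Lemma Zslice_mderiv_e a b c v y :
  Zslice a b c (mderiv e v) y = if a then 0 else Zslice true b c v y.
Proof.
by case: a; case: b; case: c; slice_rule.
Qed.

Lemma Zslice_mderiv_f a b c v y :
  Zslice a b c (mderiv f v) y = if b then 0 else Zslice a true c v y.
Proof.
by case: a; case: b; case: c; slice_rule.
Qed.

Lemma Zslice_mderiv_g a b c v y :
  Zslice a b c (mderiv g v) y = if c then 0 else Zslice a b true v y.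
Proof.
by case: a; case: b; case: c; slice_rule.
Qed.

Lemma Zslice_msetz_e a b c v y :
  Zslice a b c (msetz e v) y = if a then 0 else Zslice a b c v y.
Proof.
by case: a; case: b; case: c; slice_rule.
Qed.

Lemma Zslice_msetz_f a b c v y :
  Zslice a b c (msetz f v) y = if b then 0 else Zslice a b c v y.
Proof.
by case: a; case: b; case: c; slice_rule.
Qed.

Lemma Zslice_msetz_g a b c v y :
  Zslice a b c (msetz g v) y = if c then 0 else Zslice a b c v y.
Proof.
by case: a; case: b; case: c; slice_rule.
Qed.

Lemma eq_Zslice a b c v y1 y2 :
  (forall i, i != e -> i != f -> i != g -> y1 i = y2 i) ->
  Zslice a b c v y1 = Zslice a b c v y2.
Proof.
move=> y12; apply: eq_bigr => S _; rewrite /mslice.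
case: and3P => [[e_S f_S g_S] | _]; last by rewrite !mul0r.
congr (_ * _); apply: eq_bigr => i i_S.
by apply: y12; [move: e_S | move: f_S | move: g_S]; apply: contraNneq => <-.
Qed.

Lemma Zeval_expand v y :
  Zeval v y =
      (Zslice false false false v y + y g * Zslice false false true v y)
    + y f * (Zslice false true false v y + y g * Zslice false true true v y)
  + y e * ((Zslice true false false v y + y g * Zslice true false true v y)
    + y f * (Zslice true true false v y + y g * Zslice true true true v y)).
Proof.
rewrite (Zeval_split v y e); congr (_ + _ * _);
  rewrite (Zeval_split _ y f); congr (_ + _ * _);
  rewrite (Zeval_split _ y g); congr (_ + _ * _);
  apply: eq_Zeval; slice_pointwise.
Qed.

Lemma DeltaZ_eta_with_g (w : {set E} -> R) y t :
  DeltaZ w e f [eta y with g |-> t] =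
  DeltaZ (msetz g w) e f y + t * ThetaZ w e f g y
  + t ^+ 2 * DeltaZ (mderiv g w) e f y.
Proof.
have Zslice_eta a b c v : Zslice a b c v [eta y with g |-> t] = Zslice a b c v y.
  by apply: eq_Zslice => i _ _ /negbTE /= ->.
rewrite /DeltaZ /ThetaZ !Zeval_expand !Zslice_eta.
rewrite !(Zslice_mderiv_e, Zslice_mderiv_f, Zslice_mderiv_g,
          Zslice_msetz_e, Zslice_msetz_f, Zslice_msetz_g) /= eqxx !neq_efg.
ring.
Qed.

End Slices.

End Multiaffine.

Lemma linear_coef_ge_of_quadratic_ge0 (R : rcfType) (a b c : R) :
  (forall t, 0 < t -> 0 <= a + t * b + t ^+ 2 * c) ->
  - 2 * Num.sqrt (a * c) <= b.
Proof.
move=> quad_ge0; have sqrt_ge0 := sqrtr_ge0 (a * c).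
have [b_ge0 | b_lt0] := leP 0 b; first by lra.
have c_gt0 : 0 < c.
  rewrite ltNge; apply/negP => c_le0.
  pose t := (`|a| + 1) / - b.
  have t_gt0 : 0 < t by rewrite divr_gt0 ?oppr_gt0 ?ltr_wpDl.
  have tb : t * b = - (`|a| + 1) by rewrite /t; field; rewrite lt_eqF.
  have := quad_ge0 t t_gt0; rewrite tb.
  have := ler_norm a; have : t ^+ 2 * c <= 0 by rewrite mulr_ge0_le0 ?sqr_ge0.
  lra.
pose t := - b / (2 * c).
have discr_le0 : b ^+ 2 <= 4 * (a * c).
  have t_gt0 : 0 < t by rewrite divr_gt0 ?oppr_gt0 ?mulr_gt0.
  have vertex : (a + t * b + t ^+ 2 * c) * (4 * c) = 4 * (a * c) - b ^+ 2.
    by rewrite /t; field; rewrite gt_eqF.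
  rewrite -subr_ge0 -vertex mulr_ge0 ?quad_ge0 //; lra.
have ac_ge0 : 0 <= a * c by nra.
have := sqr_sqrtr ac_ge0; nra.
Qed.

Theorem proposition4p15 (R : rcfType) (E : finType) (w : {set E} -> R)
  (w_ge0 : forall S, 0 <= w S) (w_nz : exists S, w S != 0)
  (Hray : Rayleigh w) (e f g : E)
  (hef : e != f) (heg : e != g) (hfg : f != g)
  (y : E -> R) (hy : forall c, 0 < y c) :
  - 2 * Num.sqrt (DeltaZ (msetz g w) e f y * DeltaZ (mderiv g w) e f y)
    <= ThetaZ w e f g y.
Proof.
apply: linear_coef_ge_of_quadratic_ge0 => t t_gt0.
rewrite -DeltaZ_eta_with_g //.
by apply: Hray => // c /=; case: ifP.
Qed.
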